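(* Let $n\ge 1$, let $R$ be a commutative ring, $\iota:\mu_n\to R^\times$ an injective group homomorphism (extended by $\iota(0)=0$), and $X\in R$ an $\mathbb{S}[\mu_{n,+}]$-generator of $R$. For $z=\sum_j\iota(\alpha_j)X^j\in R$ (its unique such decomposition) let $\deg(z)$ be the smallest integer $m$ such that $\alpha_j=0$ for all $j>m$. Then: (i) For $m\in\mathbb{N}$, let $J_m=X^mR$ be the ideal generated by $X^m$. Every $z\in R$ admits a unique decomposition $z=a+b$ with $\deg(a)<m$ (i.e. $a=\sum_{j<m}\iota(\alpha_j)X^j$) and $b\in J_m$. (ii) The quotient $R_m:=R/J_m$ is a finite ring whose elements are uniquely written as (the classes of) $\sum_{j=0}^{m-1}\iota(\alpha_j)X^j$ with $\alpha_j\in\mu_n\cup\{0\}$. (iii) The quotient $R_1=R/J_1$ is a finite field with $n+1$ elements, and $\iota:\mu_n\cup\{0\}\to R$ is a multiplicative section of the quotient map $R\to R_1$. (iv) The canonical ring homomorphism $\pi:R\to\varprojlim_m R_m$ is injective. (v) The pair $(R,X)$ is uniquely specified up to isomorphism by its hold $h$: precisely, if $(R',\iota',X')$ is another such triple (same $n$) whose hold equals the hold of $(R,\iota,X)$, then there is a ring isomorphism $\rho:R\to R'$ with $\rho(X)=X'$ and $\rho\circ\iota=\iota'$.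
   Context: $\mu_n$ is the group of $n$-th roots of unity, $\mu_{n,+}=\mu_n\cup\{0\}$. For a ring $A$ with injective homomorphism $\iota:\mu_n\to A^\times$ ($\iota(0):=0$), $X\in A$ is an $\mathbb{S}[\mu_{n,+}]$-generator if every $z\in A$ is uniquely a finite sum $\sum_j\iota(\alpha_j)X^j$, $\alpha_j\in\mu_n\cup\{0\}$. Let $\mathcal{P}(\mu_n)$ be the set of sequences $(\alpha_j)_{j\in\mathbb{N}}$ in $\mu_n\cup\{0\}$ with finitely many nonzero terms, and $\sigma:\mathcal{P}(\mu_n)\to A$, $\sigma((\alpha_j))=\sum_j\iota(\alpha_j)X^j$ (a bijection when $X$ is a generator). The hold of $(A,\iota,X)$ is the map $h:\mu_n\to\mathcal{P}(\mu_n)$ defined by $\sigma(h(\xi))=\iota(\xi)+1$ for $\xi\in\mu_n$. *)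

From HB Require Import structures.
From mathcomp Require Import all_boot all_order all_algebra.
Set Implicit Arguments. Unset Strict Implicit. Unset Printing Implicit Defensive.
Import GRing.Theory.
Local Open Scope ring_scope.

(* mu_n is modelled as the cyclic group Z/nZ = 'I_n (k <-> zeta^k, for a
   fixed generator zeta); mu_{n,+} = mu_n u {0} is modelled as option 'I_n,
   with None playing the role of 0. *)

Definition mu_mul (n : nat) (i j : 'I_n) : 'I_n :=
  Ordinal (ltn_pmod (i + j) (leq_ltn_trans (leq0n i) (ltn_ord i))).

Definition muz_mul (n : nat) (a b : option 'I_n) : option 'I_n :=
  match a, b with Some i, Some j => Some (mu_mul i j) | _, _ => None end.

Definition iotaz (R : nzRingType) (n : nat) (iota : 'I_n -> R)
  (a : option 'I_n) : R := if a is Some i then iota i else 0.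

Definition is_mu_embedding (R : nzRingType) (n : nat) (iota : 'I_n -> R) : Prop :=
  [/\ (forall i, exists y, iota i * y = 1),
      (forall i j, iota (mu_mul i j) = iota i * iota j)
    & injective iota].

(* P(mu_n): finitely supported sequences (alpha_j)_j in mu_{n,+}; represented
   by finite lists with no trailing 0 (None), so that representation is unique *)
Definition noTrail (n : nat) (s : seq (option 'I_n)) : bool :=
  (s == [::]) || (last None s != None).

Definition sigma (R : nzRingType) (n : nat) (iota : 'I_n -> R) (X : R)
  (s : seq (option 'I_n)) : R :=
  \sum_(j < size s) iotaz iota (nth None s j) * X ^+ j.

Definition is_generator (R : nzRingType) (n : nat) (iota : 'I_n -> R) (X : R) : Prop :=
  forall z : R, exists! s : seq (option 'I_n), noTrail s /\ sigma iota X s = z.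

Definition deg_lt (R : nzRingType) (n : nat) (iota : 'I_n -> R) (X : R)
  (a : R) (m : nat) : Prop :=
  forall s : seq (option 'I_n), noTrail s -> sigma iota X s = a ->
    forall j, (m <= j)%N -> nth None s j = None.

Definition inJ (R : nzRingType) (X : R) (m : nat) (b : R) : Prop :=
  exists c : R, b = X ^+ m * c.

Definition congJ (R : nzRingType) (X : R) (m : nat) (z w : R) : Prop :=
  inJ X m (z - w).

Definition is_hold (R : nzRingType) (n : nat) (iota : 'I_n -> R) (X : R)
  (h : 'I_n -> seq (option 'I_n)) : Prop :=
  forall xi : 'I_n, noTrail (h xi) /\ sigma iota X (h xi) = iota xi + 1.

From HB Require Import structures.
From mathcomp Require Import all_boot all_order all_algebra ring zify.
Set Implicit Arguments. Unset Strict Implicit. Unset Printing Implicit Defensive.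
Import GRing.Theory.
Local Open Scope ring_scope.

(* Every element has a unique digit sequence, and for a sequence s of length m,
   z - sigma(s) lies in X^m R exactly when s lists the first m digits of z;
   (i)-(iv) are read off from this.  For (v), sums and products of expansions
   are formal sums of monomials iota(a) X^j, and the hold rewrites
   iota(a) X^j + iota(a c) X^j as iota(a) X^j sigma(h c).  Repeating this at
   the lowest position computes every digit of a formal sum by a procedure that
   only depends on h, so z |-> sigma'(digits z) is a ring morphism, with the
   symmetric map as inverse. *)

Lemma mu_mul_onto n (a b : 'I_n) : exists c, mu_mul a c = b.
Proof.
have n_gt0 : (0 < n)%N by apply: leq_ltn_trans (ltn_ord a).
exists (Ordinal (ltn_pmod (b + (n - a)) n_gt0)); apply: val_inj => /=.
have -> : (a + (b + (n - a)) %% n = b + n %[mod n])%N.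
  by rewrite modnDmr; congr (_ %% n)%N; have := ltn_ord a; lia.
by rewrite modnDr modn_small.
Qed.

Section Embedding.
Variables (R : comNzRingType) (n : nat) (iota : 'I_n -> R).
Hypothesis hiota : is_mu_embedding iota.

Lemma mu_embedding1 (hn : (0 < n)%N) : iota (Ordinal hn) = 1.
Proof.
case: hiota => iota_unit iotaM _; have [y iota1y] := iota_unit (Ordinal hn).
have idem1 : mu_mul (Ordinal hn) (Ordinal hn) = Ordinal hn.
  by apply: val_inj; rewrite /= mod0n.
by rewrite -[LHS]mulr1 -{1}iota1y mulrA -iotaM idem1.
Qed.

Lemma iotaz_mul a b : iotaz iota (muz_mul a b) = iotaz iota a * iotaz iota b.
Proof.
case: hiota => _ iotaM _.
by case: a => [a|]; case: b => [b|]; rewrite /= ?mul0r ?mulr0.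
Qed.

End Embedding.

Section Sigma.
Variables (R : comNzRingType) (n : nat) (iota : 'I_n -> R) (X : R).

Lemma sigma_nil : sigma iota X [::] = 0.
Proof. by rewrite /sigma big_ord0. Qed.

Lemma sigma_cons x s : sigma iota X (x :: s) = iotaz iota x + X * sigma iota X s.
Proof.
rewrite /sigma /= big_ord_recl /= expr0 mulr1 mulr_sumr; congr (_ + _).
by apply: eq_bigr => i _; rewrite exprS mulrCA.
Qed.

Lemma sigma1 x : sigma iota X [:: x] = iotaz iota x.
Proof. by rewrite sigma_cons sigma_nil mulr0 addr0. Qed.

Lemma sigma_cat s t : sigma iota X (s ++ t) = sigma iota X s + X ^+ size s * sigma iota X t.
Proof.
elim: s => [|x s IHs] /=; first by rewrite sigma_nil add0r expr0 mul1r.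
by rewrite !sigma_cons IHs mulrDr addrA exprS mulrA.
Qed.

Lemma sigma_one (hiota : is_mu_embedding iota) (hn : (0 < n)%N) :
  sigma iota X [:: Some (Ordinal hn)] = 1.
Proof. by rewrite sigma1 /= mu_embedding1. Qed.

Lemma sigma_X (hiota : is_mu_embedding iota) (hn : (0 < n)%N) :
  sigma iota X [:: None; Some (Ordinal hn)] = X.
Proof. by rewrite sigma_cons (sigma_one hiota) add0r mulr1. Qed.

End Sigma.

Fixpoint trim n (s : seq (option 'I_n)) : seq (option 'I_n) :=
  if s is x :: s' then
    let t := trim s' in if (t == [::]) && (x == None) then [::] else x :: t
  else [::].

Lemma nth_trim n (s : seq (option 'I_n)) i : nth None (trim s) i = nth None s i.
Proof.
elim: s i => [|x s IHs] i //=; case: ifP => [/andP[/eqP trim_s /eqP x0]|_].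
  by case: i => [|i] /=; rewrite ?x0 // -IHs trim_s nth_nil.
by case: i.
Qed.

Lemma noTrail_trim n (s : seq (option 'I_n)) : noTrail (trim s).
Proof.
elim: s => [|x s IHs] //=; case: ifP => // /negbT.
by rewrite negb_and /noTrail /=; case: (trim s) IHs.
Qed.

Lemma sigma_trim (R : comNzRingType) n (iota : 'I_n -> R) X s :
  sigma iota X (trim s) = sigma iota X s.
Proof.
elim: s => [|x s IHs] //=; case: ifP => [/andP[/eqP trim_s /eqP ->]|_].
  by rewrite sigma_cons -IHs trim_s sigma_nil mulr0 addr0.
by rewrite !sigma_cons IHs.
Qed.

Lemma noTrail_size_leq n (s : seq (option 'I_n)) k : noTrail s ->
  (forall j, (k <= j)%N -> nth None s j = None) -> (size s <= k)%N.
Proof.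
case: s => [//|x s] /= last_s s_k; rewrite leqNgt; apply/negP => k_lt.
by move: last_s; rewrite /noTrail /= (last_nth None) /= s_k.
Qed.

Lemma noTrail_eq n (s t : seq (option 'I_n)) : noTrail s -> noTrail t ->
  (forall i, nth None s i = nth None t i) -> s = t.
Proof.
move=> s_nt t_nt eq_st.
have size_st : size s = size t.
  apply/eqP; rewrite eqn_leq.
  rewrite (noTrail_size_leq s_nt) => [|j j_ge]; last by rewrite eq_st nth_default.
  by rewrite (noTrail_size_leq t_nt) => // j j_ge; rewrite -eq_st nth_default.
by apply: (eq_from_nth (x0 := None)) => // i _; apply: eq_st.
Qed.

Section Digits.
Variables (R : comNzRingType) (n : nat) (iota : 'I_n -> R) (X : R).
Hypothesis hX : is_generator iota X.

Lemma digits_subproof z : exists s, noTrail s && (sigma iota X s == z).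
Proof. by have [s [[s_nt <-] _]] := hX z; exists s; rewrite s_nt eqxx. Qed.

Definition digits z := xchoose (digits_subproof z).

Definition digit z i := nth None (digits z) i.

Lemma noTrail_digits z : noTrail (digits z).
Proof. by case/andP: (xchooseP (digits_subproof z)). Qed.

Lemma digitsK z : sigma iota X (digits z) = z.
Proof. by case/andP: (xchooseP (digits_subproof z)) => _ /eqP. Qed.

Lemma digit_sigma s i : digit (sigma iota X s) i = nth None s i.
Proof.
have [t [_ t_uniq]] := hX (sigma iota X s).
rewrite /digit -(nth_trim (digits _)) -(nth_trim s); congr nth.
transitivity t; [symmetry|]; apply: t_uniq.
  by rewrite sigma_trim digitsK noTrail_trim.
by rewrite sigma_trim noTrail_trim.
Qed.

Lemma eq_from_digit z w : (forall i, digit z i = digit w i) -> z = w.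
Proof.
move=> eq_zw; rewrite -(digitsK z) -(digitsK w); congr sigma.
exact: noTrail_eq (noTrail_digits z) (noTrail_digits w) eq_zw.
Qed.

Lemma digit_shift s c i :
  digit (sigma iota X s + X ^+ size s * c) i =
  if (i < size s)%N then nth None s i else digit c (i - size s).
Proof. by rewrite -{1}(digitsK c) -sigma_cat digit_sigma nth_cat. Qed.

Lemma digit_expansion m z : exists c, z = sigma iota X (mkseq (digit z) m) + X ^+ m * c.
Proof.
exists (sigma iota X (drop m (digits z))); apply: eq_from_digit => i.
have := digit_shift (mkseq (digit z) m) (sigma iota X (drop m (digits z))) i.
rewrite size_mkseq => ->; rewrite digit_sigma nth_drop.
by case: ltnP => [i_lt|/subnKC ->]; rewrite ?nth_mkseq.
Qed.

Lemma inJ_digit m b i : inJ X m b -> (i < m)%N -> digit b i = None.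
Proof.
move=> [c ->] i_lt; have := digit_shift (nseq m None) c i.
have -> : sigma iota X (nseq m None) = 0.
  by elim: m {i_lt} => [|m IHm]; rewrite ?sigma_nil //= sigma_cons IHm mulr0 addr0.
by rewrite add0r size_nseq i_lt nth_nseq i_lt.
Qed.

Lemma congJ_sigmaP m z s : size s = m ->
  congJ X m z (sigma iota X s) <-> s = mkseq (digit z) m.
Proof.
move=> size_s; split => [[c zBs]|->].
  have -> : z = sigma iota X s + X ^+ size s * c by rewrite size_s -zBs addrC subrK.
  apply: (eq_from_nth (x0 := None)) => [|i i_lt]; first by rewrite size_mkseq.
  by rewrite nth_mkseq -?size_s // digit_shift i_lt.
by have [c {1}->] := digit_expansion m z; exists c; rewrite addrC addKr.
Qed.

Lemma deg_lt_digitP a m :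
  deg_lt iota X a m <-> (forall j, (m <= j)%N -> digit a j = None).
Proof.
split=> [a_deg j m_le|a_deg s _ s_a j m_le].
  exact: a_deg (noTrail_digits a) (digitsK a) j m_le.
by rewrite -digit_sigma s_a a_deg.
Qed.

Lemma deg_lt_sigma a m : deg_lt iota X a m -> a = sigma iota X (mkseq (digit a) m).
Proof.
move/deg_lt_digitP => a_deg; apply: eq_from_digit => i; rewrite digit_sigma.
case: (ltnP i m) => [i_lt|m_le]; first by rewrite nth_mkseq.
by rewrite a_deg // nth_default ?size_mkseq.
Qed.

Lemma deg_lt_inJ_decomposition m z :
  exists! ab : R * R, [/\ deg_lt iota X ab.1 m, inJ X m ab.2 & z = ab.1 + ab.2].
Proof.
have [c z_eq] := digit_expansion m z.
exists (sigma iota X (mkseq (digit z) m), X ^+ m * c); split=> /=.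
  split=> //; last by exists c.
  by apply/deg_lt_digitP => j m_le; rewrite digit_sigma nth_default ?size_mkseq.
move=> [a b] /= [a_deg b_J z_ab].
have a_eq : a = sigma iota X (mkseq (digit z) m).
  rewrite (deg_lt_sigma a_deg); congr sigma; apply/congJ_sigmaP; rewrite ?size_mkseq //.
  by rewrite /congJ -(deg_lt_sigma a_deg) z_ab addrC addKr.
congr pair => //; apply: (@addrI _ a).
by rewrite -z_ab {1}a_eq -z_eq.
Qed.

Lemma congJ_tupleP m z (t : m.-tuple (option 'I_n)) :
  congJ X m z (sigma iota X t) <-> val t = mkseq (digit z) m.
Proof. exact: congJ_sigmaP (size_tuple t). Qed.

Definition low_digits m z : m.-tuple (option 'I_n) :=
  @Tuple m _ (mkseq (digit z) m) (introT eqP (size_mkseq _ _)).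

Lemma quotient_finite m :
  exists r : seq R, forall z, exists2 w, w \in r & congJ X m z w.
Proof.
exists [seq sigma iota X t | t : m.-tuple (option 'I_n)] => z.
exists (sigma iota X (low_digits m z)); first exact: image_f.
exact/congJ_tupleP.
Qed.

Lemma quotient_tuple_unique m z :
  exists! t : m.-tuple (option 'I_n), congJ X m z (sigma iota X t).
Proof.
exists (low_digits m z); split=> [|t /congJ_tupleP t_eq]; first exact/congJ_tupleP.
exact: val_inj.
Qed.

Lemma not_inJ1_1 (hiota : is_mu_embedding iota) (hn : (0 < n)%N) : ~ inJ X 1 1.
Proof.
move/inJ_digit => /(_ 0%N isT).
by rewrite -(sigma_one X hiota hn) digit_sigma.
Qed.

Lemma residue_inv (hiota : is_mu_embedding iota) z :
  ~ inJ X 1 z -> exists w, congJ X 1 (z * w) 1.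
Proof.
have [c] := digit_expansion 1 z; rewrite /= sigma1 expr1.
case: (digit z 0) => [i|] z_eq z_J; last by case: z_J; exists c; rewrite z_eq add0r.
have [iota_unit _ _] := hiota; have [y iota_iy] := iota_unit i.
exists y, (c * y).
by rewrite z_eq mulrDl iota_iy addrAC subrr add0r mulrA.
Qed.

Lemma residue_digit_unique z : exists! a : option 'I_n, congJ X 1 z (iotaz iota a).
Proof.
exists (digit z 0); split=> [|a]; rewrite -(sigma1 iota X).
  exact/(@congJ_sigmaP 1 z [:: _] erefl).
by move/(@congJ_sigmaP 1 z [:: a] erefl) => [].
Qed.

Lemma congJ_all_eq z w : (forall m, congJ X m z w) -> z = w.
Proof.
move=> zw; apply/subr0_eq/eq_from_digit => i.
by rewrite (inJ_digit (zw i.+1)) // -(sigma_nil iota X) digit_sigma nth_nil.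
Qed.

End Digits.

Lemma count_gt1_perm (T : eqType) (P : pred T) (s : seq T) : (1 < count P s)%N ->
  exists x y r, [/\ P x, P y & perm_eq s [:: x, y & r]].
Proof.
have s_perm := perm_filterC P s; rewrite -size_filter.
case E: (filter P s) s_perm (filter_all P s) => [|x [|y r]] //= s_perm /and3P[Px Py _] _.
by exists x, y, (r ++ filter (predC P) s); rewrite perm_sym s_perm.
Qed.

Definition at0 n (p : nat * 'I_n) : bool := p.1 == 0%N.

Definition fmul n (F G : seq (nat * 'I_n)) : seq (nat * 'I_n) :=
  [seq (p.1 + q.1, mu_mul p.2 q.2)%N | p <- F, q <- G].

Definition fshift n (F : seq (nat * 'I_n)) : seq (nat * 'I_n) := [seq (p.1.+1, p.2) | p <- F].

Definition fdrop n (F : seq (nat * 'I_n)) : seq (nat * 'I_n) :=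
  [seq (p.1.-1, p.2) | p <- F & ~~ at0 p].

Definition fdigit0 n (F : seq (nat * 'I_n)) : option 'I_n := ohead (map snd (filter (@at0 n) F)).

Fixpoint terms n (s : seq (option 'I_n)) : seq (nat * 'I_n) :=
  if s is x :: s' then (if x is Some a then [:: (0%N, a)] else [::]) ++ fshift (terms s')
  else [::].

Lemma count_at0_terms n (s : seq (option 'I_n)) : (count (@at0 n) (terms s) <= 1)%N.
Proof.
case: s => [|x s] //=; rewrite count_cat /fshift count_map.
by rewrite (@eq_count _ (preim _ (@at0 n)) pred0) // count_pred0 addn0; case: x.
Qed.

Lemma count_at0_fmul0 n (a : 'I_n) G :
  count (@at0 n) (fmul [:: (0%N, a)] G) = count (@at0 n) G.
Proof. by rewrite /fmul /= cats0 count_map. Qed.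

Section FormalSums.
Variables (R : comNzRingType) (n : nat) (iota : 'I_n -> R) (X : R).
Implicit Types F G : seq (nat * 'I_n).

Definition fsum F : R := \sum_(p <- F) iota p.2 * X ^+ p.1.

Lemma fsum_cat F G : fsum (F ++ G) = fsum F + fsum G.
Proof. exact: big_cat. Qed.

Lemma perm_fsum F G : perm_eq F G -> fsum F = fsum G.
Proof. exact: perm_big. Qed.

Lemma fsum_terms s : fsum (terms s) = sigma iota X s.
Proof.
elim: s => [|x s IHs]; first by rewrite sigma_nil /fsum big_nil.
rewrite sigma_cons -IHs /= fsum_cat /fsum /fshift big_map mulr_sumr.
congr (_ + _); last by apply: eq_bigr => p _; rewrite exprS mulrCA.
by case: x => [a|]; rewrite ?big_seq1 ?big_nil //= expr0 mulr1.
Qed.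

Lemma fsum_fmul (hiota : is_mu_embedding iota) F G : fsum (fmul F G) = fsum F * fsum G.
Proof.
case: hiota => _ iotaM _.
rewrite /fsum /fmul big_allpairs_dep mulr_suml; apply: eq_bigr => p _.
by rewrite mulr_sumr; apply: eq_bigr => q _ /=; rewrite iotaM exprD; ring.
Qed.

Lemma fsum_at0 F : (count (@at0 n) F <= 1)%N ->
  fsum F = sigma iota X [:: fdigit0 F] + X ^+ 1 * fsum (fdrop F).
Proof.
move=> F_le1; rewrite /fsum (bigID (@at0 n)) /=; congr (_ + _).
  rewrite sigma1 -big_filter /fdigit0; rewrite -size_filter in F_le1.
  case: (filter _ F) F_le1 (filter_all (@at0 n) F) => [|[j a] [|]] //=.
    by rewrite big_nil.
  by rewrite big_seq1 andbT => _ /eqP /= ->; rewrite expr0 mulr1.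
rewrite /fdrop big_map big_filter mulr_sumr; apply: eq_bigr => -[[|j] a] //= _.
by rewrite exprS expr1 mulrCA.
Qed.

Lemma fsum_hold (hiota : is_mu_embedding iota) h (hh : is_hold iota X h) j a c G :
  fsum [:: (j, a), (j, mu_mul a c) & G] = fsum (G ++ fmul [:: (j, a)] (terms (h c))).
Proof.
have [_ sigma_h] := hh c; have [_ iotaM _] := hiota.
rewrite fsum_cat fsum_fmul // fsum_terms sigma_h /fsum !big_cons big_nil /= iotaM.
ring.
Qed.

End FormalSums.

Section Transfer.
Variables (n : nat) (R R' : comNzRingType) (iota : 'I_n -> R) (iota' : 'I_n -> R').
Variables (X : R) (X' : R') (h : 'I_n -> seq (option 'I_n)).
Hypotheses (hiota : is_mu_embedding iota) (hiota' : is_mu_embedding iota').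
Hypotheses (hX : is_generator iota X) (hX' : is_generator iota' X').
Hypotheses (hh : is_hold iota X h) (hh' : is_hold iota' X' h).

Lemma fsum_normalize_at0 F : exists G,
  [/\ fsum iota X G = fsum iota X F, fsum iota' X' G = fsum iota' X' F
    & (count (@at0 n) G <= 1)%N].
Proof.
(* Each hold step trades two monomials at position 0 for at most one. *)
elim: {F}(count _ F).+1 {-2}F (ltnSn (count (@at0 n) F)) => // k IHk F F_lt.
case: (leqP (count (@at0 n) F) 1) => [|F_gt1]; first by exists F.
have [[j a] [[j' b] [G [/eqP /= j0 /eqP /= j'0 F_perm]]]] := count_gt1_perm F_gt1.
have [c b_eq] := mu_mul_onto a b; subst j j' b.
have [|G' [G'_eq G'_eq' G'_le1]] := IHk (G ++ fmul [:: (0%N, a)] (terms (h c))).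
  have := permP F_perm (@at0 n); have := count_at0_terms (h c).
  by move: F_lt; rewrite count_cat count_at0_fmul0 /= /at0 /=; lia.
exists G'; rewrite G'_eq G'_eq' -!fsum_hold //.
by split=> //; apply: perm_fsum; rewrite perm_sym.
Qed.

Lemma digit_fsum i F : digit hX (fsum iota X F) i = digit hX' (fsum iota' X' F) i.
Proof.
elim: i F => [|i IHi] F; have [G [<- <- G_le1]] := fsum_normalize_at0 F;
  rewrite (fsum_at0 iota X G_le1) (fsum_at0 iota' X' G_le1) !digit_shift //.
by rewrite /= subn1 IHi.
Qed.

Definition transfer z := sigma iota' X' (digits hX z).

Lemma transfer_fsum F : transfer (fsum iota X F) = fsum iota' X' F.
Proof. by apply: (eq_from_digit (hX := hX')) => i; rewrite digit_sigma -digit_fsum. Qed.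

Lemma transfer_sigma s : transfer (sigma iota X s) = sigma iota' X' s.
Proof. by rewrite -!fsum_terms transfer_fsum. Qed.

Lemma transfer_nmod_morphism : GRing.nmod_morphism transfer.
Proof.
split=> [|z w]; first by have := transfer_fsum [::]; rewrite /fsum !big_nil.
rewrite -{1}(digitsK hX z) -{1}(digitsK hX w) -!(fsum_terms iota X) -fsum_cat.
by rewrite transfer_fsum fsum_cat !fsum_terms.
Qed.

Lemma transfer_monoid_morphism (hn : (0 < n)%N) : GRing.monoid_morphism transfer.
Proof.
split=> [|z w]; first by rewrite -(sigma_one X hiota hn) transfer_sigma sigma_one.
rewrite -{1}(digitsK hX z) -{1}(digitsK hX w) -!(fsum_terms iota X) -fsum_fmul //.
by rewrite transfer_fsum fsum_fmul // !fsum_terms.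
Qed.

Lemma transferX (hn : (0 < n)%N) : transfer X = X'.
Proof. by have := transfer_sigma [:: None; Some (Ordinal hn)]; rewrite !sigma_X. Qed.

Lemma transfer_iota xi : transfer (iota xi) = iota' xi.
Proof. by have := transfer_sigma [:: Some xi]; rewrite !sigma1. Qed.

End Transfer.

Lemma transferK n (R R' : comNzRingType) (iota : 'I_n -> R) (iota' : 'I_n -> R')
    (X : R) (X' : R') (h : 'I_n -> seq (option 'I_n))
    (hiota : is_mu_embedding iota) (hiota' : is_mu_embedding iota')
    (hX : is_generator iota X) (hX' : is_generator iota' X')
    (hh : is_hold iota X h) (hh' : is_hold iota' X' h) :
  cancel (transfer iota' X' hX) (transfer iota X hX').
Proof. by move=> z; rewrite {2}/transfer (transfer_sigma hiota' hiota hX' hX hh' hh) digitsK. Qed.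

Lemma hold_isomorphism n (hn : (0 < n)%N) (R R' : comNzRingType)
    (iota : 'I_n -> R) (iota' : 'I_n -> R') (X : R) (X' : R')
    (h : 'I_n -> seq (option 'I_n)) :
  is_mu_embedding iota -> is_mu_embedding iota' ->
  is_generator iota X -> is_generator iota' X' ->
  is_hold iota X h -> is_hold iota' X' h ->
  exists rho : {rmorphism R -> R'},
    [/\ bijective rho, rho X = X' & forall xi, rho (iota xi) = iota' xi].
Proof.
move=> hiota hiota' hX hX' hh hh'; pose rho := transfer iota' X' hX.
have rho_nmod := transfer_nmod_morphism hiota hiota' hX hX' hh hh'.
have rho_monoid := transfer_monoid_morphism hiota hiota' hX hX' hh hh' hn.
exists (HB.pack_for {rmorphism R -> R'} rho
          (GRing.isNmodMorphism.Build _ _ rho rho_nmod)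
          (GRing.isMonoidMorphism.Build _ _ rho rho_monoid)).
split=> /=; first by exists (transfer iota X hX'); apply: transferK.
  exact: transferX hiota hiota' hX hX' hh hh' hn.
exact: transfer_iota hiota hiota' hX hX' hh hh'.
Qed.

Theorem proposition5p6 (n : nat) (hn : (0 < n)%N) (R : comNzRingType)
  (iota : 'I_n -> R) (X : R)
  (hiota : is_mu_embedding iota) (hX : is_generator iota X) :
  (* (i) *)
  (forall (m : nat) (z : R),
     exists! ab : R * R,
       [/\ deg_lt iota X ab.1 m, inJ X m ab.2 & z = ab.1 + ab.2]) /\
  (* (ii) *)
  (forall m : nat,
     (exists r : seq R, forall z : R, exists2 w, w \in r & congJ X m z w) /\
     (forall z : R, exists! s : m.-tuple (option 'I_n), congJ X m z (sigma iota X s))) /\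
  (* (iii) *)
  [/\ ~ inJ X 1 1,
      (forall z : R, ~ inJ X 1 z -> exists w : R, congJ X 1 (z * w) 1),
      (forall z : R, exists! a : option 'I_n, congJ X 1 z (iotaz iota a)),
      #|{: option 'I_n}| = n.+1
    & (forall a b : option 'I_n,
         iotaz iota (muz_mul a b) = iotaz iota a * iotaz iota b)] /\
  (* (iv) *)
  (forall z w : R, (forall m : nat, congJ X m z w) -> z = w) /\
  (* (v) *)
  (forall (R' : comNzRingType) (iota' : 'I_n -> R') (X' : R'),
     is_mu_embedding iota' -> is_generator iota' X' ->
     forall h : 'I_n -> seq (option 'I_n),
       is_hold iota X h -> is_hold iota' X' h ->
       exists rho : {rmorphism R -> R'},
         [/\ bijective rho, rho X = X' & forall xi, rho (iota xi) = iota' xi]).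
Proof.
split; first exact: deg_lt_inJ_decomposition hX.
split; first by move=> m; split; [exact: quotient_finite | exact: quotient_tuple_unique].
split.
  split; [exact: not_inJ1_1 hX hiota hn | exact: residue_inv hX hiota |
          exact: residue_digit_unique hX | by rewrite card_option card_ord |
          exact: iotaz_mul].
split; first exact: congJ_all_eq hX.
move=> R' iota' X' hiota' hX' h hh hh'.
exact (hold_isomorphism hn hiota hiota' hX hX' hh hh').
Qed.
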